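(* Fix a multi-time quantum process except for the channel at one time step $t_j$, and fix all measurements. For CPTP maps $\mathcal{E}_{t_j\leftarrow t_{j-1}}$ and $\mathcal{K}_{t_j\leftarrow t_{j-1}}$ from $t_{j-1}$ to $t_j$ and $\lambda\in[0,1]$, writing $\overrightarrow{Q}_{\rm KD}[\mathcal{F}]$ for the right temporal KD distribution of the process whose channel at step $t_j$ is $\mathcal{F}$, $$\mathcal{N}\big[\overrightarrow{Q}_{\rm KD}[\lambda\mathcal{E}_{t_j\leftarrow t_{j-1}}+(1-\lambda)\mathcal{K}_{t_j\leftarrow t_{j-1}}]\big]\le\lambda\,\mathcal{N}\big[\overrightarrow{Q}_{\rm KD}[\mathcal{E}_{t_j\leftarrow t_{j-1}}]\big]+(1-\lambda)\,\mathcal{N}\big[\overrightarrow{Q}_{\rm KD}[\mathcal{K}_{t_j\leftarrow t_{j-1}}]\big].$$ The same holds for the left and doubled temporal KD distributions.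
   Context: A multi-time quantum process $(\rho_{t_0},\mathcal{E}_{t_1\leftarrow t_0},\dots,\mathcal{E}_{t_n\leftarrow t_{n-1}})$ consists of a density operator and CPTP maps on finite-dimensional spaces, extended linearly to all operators; complete families of orthogonal projectors are fixed at each time. $\overrightarrow{Q}_{\rm KD}(b_n,\dots,b_0)=\operatorname{Tr}[\mathcal{E}_{t_n\leftarrow t_{n-1}}(\cdots\mathcal{E}_{t_1\leftarrow t_0}(\rho_{t_0}\Pi^{t_0}_{b_0})\Pi^{t_1}_{b_1}\cdots)\Pi^{t_n}_{b_n}]$; $\overleftarrow{Q}_{\rm KD}(a_n,\dots,a_0)=\operatorname{Tr}[\Pi^{t_n}_{a_n}\mathcal{E}_{t_n\leftarrow t_{n-1}}(\cdots\Pi^{t_1}_{a_1}\mathcal{E}_{t_1\leftarrow t_0}(\Pi^{t_0}_{a_0}\rho_{t_0})\cdots)]$; $\overleftrightarrow{Q}_{\rm KD}(a;b)=\operatorname{Tr}[\Pi^{t_n}_{a_n}\mathcal{E}_{t_n\leftarrow t_{n-1}}(\cdots\Pi^{t_1}_{a_1}\mathcal{E}_{t_1\leftarrow t_0}(\Pi^{t_0}_{a_0}\rho_{t_0}\Pi^{t_0}_{b_0})\Pi^{t_1}_{b_1}\cdots)\Pi^{t_n}_{b_n}]$. For any such distribution $Q$, $\mathcal{N}[Q]=\sum_{\text{all outcomes}}|Q|-1$. *)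

From HB Require Import structures.
From mathcomp Require Import all_boot all_order all_algebra all_field.
Set Implicit Arguments. Unset Strict Implicit. Unset Printing Implicit Defensive.
Import Order.TTheory GRing.Theory Num.Theory.
Local Open Scope ring_scope.

Definition psd_fun (T : finType) (X : T -> T -> algC) : Prop :=
  (forall p q, X q p = (X p q)^*) /\
  (forall v : T -> algC, 0 <= \sum_(p : T) \sum_(q : T) (v p)^* * X p q * v q).

Definition psdmx (m : nat) (X : 'M[algC]_m) : Prop := psd_fun (fun i j => X i j).

(* Ampliation id_k (x) E acting on operators on C^k (x) C^m. *)
Definition ampl (k m m' : nat) (E : 'M[algC]_m -> 'M[algC]_m')
  (X : 'I_k * 'I_m -> 'I_k * 'I_m -> algC) : 'I_k * 'I_m' -> 'I_k * 'I_m' -> algC :=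
  fun p q => E (\matrix_(a, b) X (p.1, a) (q.1, b)) p.2 q.2.

Definition completely_positive (m m' : nat) (E : 'M[algC]_m -> 'M[algC]_m') : Prop :=
  forall (k : nat) (X : 'I_k * 'I_m -> 'I_k * 'I_m -> algC),
    psd_fun X -> psd_fun (ampl E X).

Definition trace_preserving (m m' : nat) (E : 'M[algC]_m -> 'M[algC]_m') : Prop :=
  forall X, \tr (E X) = \tr X.

Definition CPTP (m m' : nat) (E : 'M[algC]_m -> 'M[algC]_m') : Prop :=
  linear E /\ completely_positive E /\ trace_preserving E.

Definition density (m : nat) (rho : 'M[algC]_m) : Prop := psdmx rho /\ \tr rho = 1.

Definition adjmx (m : nat) (A : 'M[algC]_m) : 'M[algC]_m := map_mx (fun x : algC => x^*) A^T.

Definition complete_projectors (m : nat) (A : finType) (P : A -> 'M[algC]_m) : Prop :=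
  (forall a, adjmx (P a) = P a) /\
  (forall a b, P a *m P b = if a == b then P a else 0) /\
  (\sum_(a : A) P a = 1%:M).

(* A multi-time process with times t_0,...,t_n: dimension d k at time t_k,
   initial state rho, channels E k : t_{k-1} -> t_k (k = 1..n), outcome set A k
   and projectors Pi k at time t_k. *)
Section KD.
Variables (n : nat) (d : nat -> nat) (A : nat -> finType).
Variables (rho : 'M[algC]_(d 0)) (Pi : forall k, A k -> 'M[algC]_(d k))
          (E : forall k : nat, 'M[algC]_(d k.-1) -> 'M[algC]_(d k)).

Fixpoint XR (b : forall i : 'I_n.+1, A i) (k : nat) : (k < n.+1)%N -> 'M[algC]_(d k) :=
  match k return (k < n.+1)%N -> 'M[algC]_(d k) with
  | 0 => fun h => rho *m Pi (b (Ordinal h))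
  | k'.+1 => fun h => @E k'.+1 (XR b (ltnW h)) *m Pi (b (Ordinal h))
  end.

Fixpoint XL (a : forall i : 'I_n.+1, A i) (k : nat) : (k < n.+1)%N -> 'M[algC]_(d k) :=
  match k return (k < n.+1)%N -> 'M[algC]_(d k) with
  | 0 => fun h => Pi (a (Ordinal h)) *m rho
  | k'.+1 => fun h => Pi (a (Ordinal h)) *m @E k'.+1 (XL a (ltnW h))
  end.

Fixpoint XD (a b : forall i : 'I_n.+1, A i) (k : nat) : (k < n.+1)%N -> 'M[algC]_(d k) :=
  match k return (k < n.+1)%N -> 'M[algC]_(d k) with
  | 0 => fun h => Pi (a (Ordinal h)) *m rho *m Pi (b (Ordinal h))
  | k'.+1 => fun h => Pi (a (Ordinal h)) *m @E k'.+1 (XD a b (ltnW h)) *m Pi (b (Ordinal h))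
  end.

Definition outcomes := {dffun forall i : 'I_n.+1, A i}.

Definition QKD_right (b : outcomes) : algC := \tr (XR b (ltnSn n)).
Definition QKD_left (a : outcomes) : algC := \tr (XL a (ltnSn n)).
Definition QKD_doubled (a b : outcomes) : algC := \tr (XD a b (ltnSn n)).

Definition negR : algC := \sum_(b : outcomes) `|QKD_right b| - 1.
Definition negL : algC := \sum_(a : outcomes) `|QKD_left a| - 1.
Definition negD : algC := \sum_(a : outcomes) \sum_(b : outcomes) `|QKD_doubled a b| - 1.

End KD.

Definition process (n : nat) (d : nat -> nat) (A : nat -> finType)
  (rho : 'M[algC]_(d 0)) (Pi : forall k, A k -> 'M[algC]_(d k))
  (E : forall k : nat, 'M[algC]_(d k.-1) -> 'M[algC]_(d k)) : Prop :=
  density rho /\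
  (forall k, (0 < k <= n)%N -> CPTP (E k)) /\
  (forall k, (k <= n)%N -> complete_projectors (Pi k)).

(* The KD distribution is a trace of an operator chain X_k = S_k (F_k X_{k-1}), where F_k are the
   channels and S_k the (linear) multiplication by projectors.  The chain is affine in the channel at
   step j, so the quasi-probabilities of the mixed process are the same convex combination of those of
   the two processes, and the triangle inequality for |.| makes the negativity convex. *)
From HB Require Import structures.
From mathcomp Require Import all_boot all_order all_algebra all_field.
From mathcomp Require Import ring.
Import Order.TTheory GRing.Theory Num.Theory.
Local Open Scope ring_scope.

Lemma linear_comb (R : pzRingType) (U V : lmodType R) (f : U -> V) a b u v :
  linear f -> f (a *: u + b *: v) = a *: f u + b *: f v.
Proof.
move=> linf; pose g : {linear U -> V} := HB.pack f (GRing.isLinear.Build _ _ _ _ f linf).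
by rewrite -[f]/(g : U -> V) linearD !linearZ.
Qed.

Section ChainMix.
Variables (R : pzRingType) (n : nat) (d : nat -> nat).
Variables (E K M : forall k : nat, 'M[R]_(d k.-1) -> 'M[R]_(d k)) (j : nat) (lam : R).
Hypotheses (le_jn : (j <= n)%N)
  (linE : forall k, (0 < k <= n)%N -> linear (E k))
  (KE : forall k, k != j -> K k = E k)
  (ME : forall k, k != j -> M k = E k)
  (Mj : forall X, M j X = lam *: E j X + (1 - lam) *: K j X).

Variable X : (forall k : nat, 'M[R]_(d k.-1) -> 'M[R]_(d k)) ->
  forall k : nat, (k < n.+1)%N -> 'M[R]_(d k).
Variable S : forall k : nat, (k < n.+1)%N -> {linear 'M[R]_(d k) -> 'M[R]_(d k)}.
Hypotheses (X0 : forall F G h, X F 0 h = X G 0 h)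
  (XS : forall F k h, X F k.+1 h = S _ h (F k.+1 (X F k (ltnW h)))).

Lemma chain_prefix {F} : (forall k, k != j -> F k = E k) ->
  forall k h, (k < j)%N -> X F k h = X E k h.
Proof.
move=> FE; elim=> [|k IH] h lt_kj; first exact: X0.
by rewrite !XS FE ?ltn_eqF // IH // ltnW.
Qed.

Lemma chain_mix k h : (j <= k)%N -> X M k h = lam *: X E k h + (1 - lam) *: X K k h.
Proof.
elim: k h => [|k IH] h.
  by rewrite !(X0 _ E) -scalerDl addrC subrK scale1r.
rewrite leq_eqVlt ltnS => /orP[/eqP ej | le_jk].
  have lt_kj : (k < j)%N by rewrite ej.
  have Mk := Mj; rewrite ej in Mk.
  by rewrite !XS Mk (chain_prefix ME) ?(chain_prefix KE) // linearD !linearZ.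
rewrite !XS ME ?KE ?gtn_eqF // IH // linear_comb ?linearD ?linearZ //.
by apply: linE; rewrite /= -ltnS.
Qed.

Lemma trace_chain_mix :
  \tr (X M n (ltnSn n)) = lam * \tr (X E n (ltnSn n)) + (1 - lam) * \tr (X K n (ltnSn n)).
Proof. by rewrite chain_mix // mxtraceD !mxtraceZ. Qed.

End ChainMix.

Lemma negativity_convex (R : numDomainType) (I : finType) (P Q Q' : I -> R) lam :
  0 <= lam <= 1 -> (forall i, P i = lam * Q i + (1 - lam) * Q' i) ->
  \sum_i `|P i| - 1 <= lam * (\sum_i `|Q i| - 1) + (1 - lam) * (\sum_i `|Q' i| - 1).
Proof.
move=> /andP[lam_ge0 lam_le1] PQ.
have -> : lam * (\sum_i `|Q i| - 1) + (1 - lam) * (\sum_i `|Q' i| - 1) =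
    lam * \sum_i `|Q i| + (1 - lam) * \sum_i `|Q' i| - 1 by ring.
rewrite lerD2r !mulr_sumr -big_split /=; apply: ler_sum => i _.
rewrite PQ; apply: le_trans (ler_normD _ _) _.
by rewrite !normrM (ger0_norm lam_ge0) (@ger0_norm _ (1 - lam)) ?subr_ge0.
Qed.

Theorem mainTheorem8 (n : nat) (d : nat -> nat) (A : nat -> finType)
  (rho : 'M[algC]_(d 0)) (Pi : forall k, A k -> 'M[algC]_(d k))
  (E K M : forall k : nat, 'M[algC]_(d k.-1) -> 'M[algC]_(d k))
  (j : nat) (lam : algC) :
  (0 < j <= n)%N ->
  @process n d A rho Pi E ->
  @process n d A rho Pi K ->
  (forall k, k != j -> K k = E k) ->
  (forall k, k != j -> M k = E k) ->
  (forall X, M j X = lam *: E j X + (1 - lam) *: K j X) ->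
  0 <= lam <= 1 ->
  [/\ @negR n d A rho Pi M <= lam * @negR n d A rho Pi E + (1 - lam) * @negR n d A rho Pi K,
      @negL n d A rho Pi M <= lam * @negL n d A rho Pi E + (1 - lam) * @negL n d A rho Pi K &
      @negD n d A rho Pi M <= lam * @negD n d A rho Pi E + (1 - lam) * @negD n d A rho Pi K].
Proof.
move=> /andP[_ le_jn] [_ [chE _]] _ KE ME Mj lam01.
have linE k : (0 < k <= n)%N -> linear (E k) by move=> /chE[].
have mix := @trace_chain_mix _ n d E K M j lam le_jn linE KE ME Mj.
split; last rewrite /negD !pair_bigA; apply: negativity_convex => //.
- move=> b; apply: (mix (fun F => XR rho Pi F b)
    (fun k h => mulmxr (Pi k (b (Ordinal h))))) => //.
- move=> a; apply: (mix (fun F => XL rho Pi F a)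
    (fun k h => mulmx (Pi k (a (Ordinal h))))) => //.
- move=> [a b]; apply: (mix (fun F => XD rho Pi F a b)
    (fun k h => mulmxr (Pi k (b (Ordinal h))) \o mulmx (Pi k (a (Ordinal h))))) => //.
Qed.
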